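(* Let $\Delta\ge 3$ be an integer and let $G\in\mathcal{G}_\Delta$. Let $c_1,\dots,c_\Delta$ be real numbers with $0<c_\Delta\le \frac{2}{2\Delta+1}$ and $c_i=\min\left\{\frac{1-c_{i+1}}{i},\frac{2}{2i+1}\right\}$ for $1\le i\le \Delta-1$. Then $$\alpha(G)\ge \sum_{i=1}^{\Delta} c_i|V_i(G)|.$$
   Context: All graphs are simple, finite and undirected. For an integer $\Delta\ge 3$, $\mathcal{G}_\Delta$ denotes the set of connected graphs $G\neq K_{\Delta+1}$ with maximum degree $\Delta$. For a graph $G$ and $i\ge 1$, $V_i(G)$ is the set of vertices of $G$ of degree $i$. $\alpha(G)$ is the independence number of $G$ (maximum size of a set of pairwise non-adjacent vertices). *)

From mathcomp Require Import all_boot all_order all_algebra.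
Set Implicit Arguments. Unset Strict Implicit. Unset Printing Implicit Defensive.
Import Order.TTheory GRing.Theory Num.Theory.

Definition simple_graph (T : finType) (e : rel T) : Prop :=
  symmetric e /\ irreflexive e.

Definition deg (T : finType) (e : rel T) (v : T) : nat := #|[set u | e v u]|.

Definition Vdeg (T : finType) (e : rel T) (i : nat) : {set T} :=
  [set v | deg e v == i].

Definition connected_graph (T : finType) (e : rel T) : Prop :=
  forall x y : T, connect e x y.

Definition max_degree_eq (T : finType) (e : rel T) (D : nat) : Prop :=
  (forall v, deg e v <= D) /\ (exists v, deg e v = D).

Definition is_complete (T : finType) (e : rel T) (n : nat) : Prop :=
  #|T| = n /\ (forall x y : T, x != y -> e x y).

Definition independent (T : finType) (e : rel T) (S : {set T}) : bool :=
  [forall x in S, forall y in S, ~~ e x y].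

Definition alpha (T : finType) (e : rel T) : nat :=
  \max_(S : {set T} | independent e S) #|S|.

From mathcomp Require Import all_boot all_order all_algebra.
From mathcomp Require Import zify ring lra.
Import Order.TTheory GRing.Theory Num.Theory.
Set Implicit Arguments. Unset Strict Implicit. Unset Printing Implicit Defensive.

(* Write the weight of a vertex of degree d as c_d and argue on induced subgraphs G[A].
   By induction on |A|: if A is contained in S and no vertex of A spans a clique
   component of G[S], then the weights of the S-degrees on A sum to at most alpha(G[A]).
   A clique component K of G[A] is not one of G[S], so some vertex of K has a larger
   S-degree and K weighs at most c_(j+1) + j c_j <= 1: delete K, losing one from alpha.
   Otherwise the degrees can be taken in G[A], since c is nonincreasing.  If a vertex of
   minimum degree k has a neighbour of larger degree, its closed neighbourhood again
   weighs at most c_(k+1) + k c_k <= 1.  If not, the vertices of degree k form a union of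
   k-regular components of G[A] with no K_(k+1), and such a graph on m vertices has
   alpha >= 2m/(2k+1) >= c_k m: greedily delete closed neighbourhoods; each deletion removes
   k+1 vertices but leaves a vertex of degree < k, so the next one removes at most k. *)

Section InducedSubgraph.
Variables (T : finType) (e : rel T).
Hypotheses (e_sym : symmetric e) (e_irr : irreflexive e).
Implicit Types (A B C F K S : {set T}) (x y : T).

Definition nbhd S x := [set y in S | e x y].
Definition degree_in S x := #|nbhd S x|.
Definition closed_nbhd S x := x |: nbhd S x.

(* The closed neighbourhood of [x] is a connected component of G[S] inducing a clique. *)
Definition clique_component S x :=
  [forall y in nbhd S x, closed_nbhd S y == closed_nbhd S x].

(* For [A \subset S]: [A] is a union of connected components of G[S]. *)
Definition adj_closed A S := [forall x in A, nbhd S x \subset A].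

Definition alpha_in S := \max_(I : {set T} | independent e I && (I \subset S)) #|I|.

Lemma independentP (I : {set T}) :
  reflect {in I &, forall x y, ~~ e x y} (independent e I).
Proof.
apply: (iffP forall_inP) => [H x y xI yI|H x xI].
  by have /forall_inP := H x xI; apply.
by apply/forall_inP => y yI; apply: H.
Qed.

Lemma leq_alpha_in I S : independent e I -> I \subset S -> #|I| <= alpha_in S.
Proof.
by move=> indI IS; apply: (leq_bigmax_cond (P := fun J => _ && _)); rewrite indI IS.
Qed.

Lemma alpha_in_witness S :
  exists I, [/\ independent e I, I \subset S & #|I| = alpha_in S].
Proof.
have indS0 : independent e set0 && (set0 \subset S).
  by rewrite sub0set andbT; apply/independentP => x y; rewrite inE.
have [I /andP[indI IS] Imax] := arg_maxnP (fun I : {set T} => #|I|)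
  (P := fun I => independent e I && (I \subset S)) indS0.
exists I; split=> //; apply/eqP; rewrite eqn_leq leq_alpha_in //.
by apply/bigmax_leqP => J /andP[indJ JS]; apply: Imax; rewrite indJ JS.
Qed.

Lemma alpha_in_setT : alpha e = alpha_in [set: T].
Proof. by apply: eq_bigl => I; rewrite subsetT andbT. Qed.

Lemma notin_nbhd S x : x \notin nbhd S x.
Proof. by rewrite inE e_irr andbF. Qed.

Lemma mem_closed_nbhd S x : x \in closed_nbhd S x.
Proof. exact: setU11. Qed.

Lemma card_closed_nbhd S x : #|closed_nbhd S x| = (degree_in S x).+1.
Proof. by rewrite cardsU1 notin_nbhd. Qed.

Lemma closed_nbhd_sub S x : x \in S -> closed_nbhd S x \subset S.
Proof. by move=> xS; apply/subsetP => y /setU1P[->|]; rewrite // inE => /andP[]. Qed.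

Lemma nbhdS A S x : A \subset S -> nbhd A x \subset nbhd S x.
Proof. by move=> AS; apply/subsetP => y; rewrite !inE => /andP[/(subsetP AS) -> ->]. Qed.

Lemma degree_inS A S x : A \subset S -> degree_in A x <= degree_in S x.
Proof. by move=> AS; apply/subset_leq_card/nbhdS. Qed.

Lemma degree_in_setT x : degree_in [set: T] x = deg e x.
Proof. by apply: eq_card => y; rewrite !inE. Qed.

Lemma card_setD_closed_nbhd S x :
  x \in S -> #|S| = #|S :\: closed_nbhd S x| + (degree_in S x).+1.
Proof.
move=> xS; rewrite -(cardsID (closed_nbhd S x) S) addnC -card_closed_nbhd.
by rewrite (setIidPr (closed_nbhd_sub xS)).
Qed.

Lemma alpha_in_setD_closed_nbhd S x :
  x \in S -> (alpha_in (S :\: closed_nbhd S x)).+1 <= alpha_in S.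
Proof.
move=> xS; have [I [indI IS <-]] := alpha_in_witness (S :\: closed_nbhd S x).
have IxS y : y \in I -> y \in S /\ ~~ e x y.
  by move/(subsetP IS); rewrite !inE negb_or => /andP[/andP[_]]; case: (y \in S).
have xI : x \notin I by apply/negP => /(subsetP IS); rewrite inE mem_closed_nbhd.
have <- : #|x |: I| = #|I|.+1 by rewrite cardsU1 xI.
apply: leq_alpha_in.
  apply/independentP => y z; rewrite !inE.
  case/orP=> [/eqP->|yI] /orP[/eqP->|zI]; first by rewrite e_irr.
  - by case: (IxS z zI).
  - by rewrite e_sym; case: (IxS y yI).
  - exact: (independentP _ indI).
by apply/subsetP => y /setU1P[->//|/IxS[]].
Qed.

Lemma nbhd_adj_closed A S x :
  A \subset S -> adj_closed A S -> x \in A -> nbhd A x = nbhd S x.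
Proof.
move=> AS /forall_inP/(_ x) Acl xA; apply/eqP; rewrite eqEsubset nbhdS //=.
apply/subsetP => y yS; rewrite inE (subsetP (Acl xA)) //.
by move: yS; rewrite inE => /andP[].
Qed.

Lemma alpha_in_adj_closed A S :
  A \subset S -> adj_closed A S -> alpha_in A + alpha_in (S :\: A) <= alpha_in S.
Proof.
move=> AS Acl; have [I [indI IA <-]] := alpha_in_witness A.
have [J [indJ JSA <-]] := alpha_in_witness (S :\: A).
have noedge y z : y \in I -> z \in J -> ~~ e y z.
  move=> /(subsetP IA) yA /(subsetP JSA); rewrite inE => /andP[zA zS].
  apply: contra zA => eyz; have /forall_inP/(_ y yA)/subsetP := Acl; apply.
  by rewrite inE zS.
rewrite -cardsUI.
have -> : I :&: J = set0.
  apply/setP => y; rewrite !inE; apply/negP => /andP[/(subsetP IA) yA].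
  by move/(subsetP JSA); rewrite inE yA.
rewrite cards0 addn0; apply: leq_alpha_in; last first.
  by rewrite subUset (subset_trans IA AS) (subset_trans JSA (subsetDl _ _)).
apply/independentP => y z; rewrite !inE.
case/orP=> [yI|yJ] /orP[zI|zJ].
- exact: (independentP _ indI).
- exact: noedge.
- by rewrite e_sym noedge.
- exact: (independentP _ indJ).
Qed.

Lemma closed_nbhd_clique_component S x y :
  clique_component S x -> y \in closed_nbhd S x -> closed_nbhd S y = closed_nbhd S x.
Proof. by move=> /forall_inP ccx /setU1P[->//|/ccx/eqP]. Qed.

Lemma degree_clique_component S x y :
  clique_component S x -> y \in closed_nbhd S x -> degree_in S y = degree_in S x.
Proof.
move=> ccx yN; apply/succn_inj.
by rewrite -!card_closed_nbhd (closed_nbhd_clique_component ccx yN).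
Qed.

Lemma clique_component_degree0 S x : degree_in S x = 0 -> clique_component S x.
Proof. by move=> /cards0_eq N0; apply/forall_inP => y; rewrite N0 inE. Qed.

Lemma clique_componentS A S x :
  A \subset S -> x \in A -> clique_component A x ->
  {in closed_nbhd A x, forall y, degree_in S y <= degree_in A y} ->
  clique_component S x.
Proof.
move=> AS xA ccx degAS.
have nbhdAS y : y \in closed_nbhd A x -> nbhd A y = nbhd S y.
  move=> yN; apply/eqP; rewrite eqEcard nbhdS //=; exact: degAS.
have NxAS := nbhdAS x (mem_closed_nbhd A x).
apply/forall_inP => y; rewrite -NxAS => yN.
have yN' : y \in closed_nbhd A x by rewrite setU1r.
rewrite /closed_nbhd -(nbhdAS y yN') -NxAS.
by rewrite -/(closed_nbhd A y) -/(closed_nbhd A x) (closed_nbhd_clique_component ccx yN').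
Qed.

Lemma connected_clique_component_complete x y :
  connected_graph e -> clique_component [set: T] x -> is_complete e (deg e y).+1.
Proof.
move=> conn ccx.
have ccE z : closed_nbhd [set: T] z = closed_nbhd [set: T] x.
  suff: z \in closed_nbhd [set: T] x by apply: closed_nbhd_clique_component.
  have closedN : closed e (mem (closed_nbhd [set: T] x)).
    suff N_closed u v :
        e u v -> u \in closed_nbhd [set: T] x -> v \in closed_nbhd [set: T] x.
      by move=> u v euv; apply/idP/idP; apply: N_closed; rewrite // e_sym.
    move=> euv /(closed_nbhd_clique_component ccx) <-.
    by apply: setU1r; rewrite !inE.
  by rewrite -(closed_connect closedN (conn x z)) mem_closed_nbhd.
have NT z : closed_nbhd [set: T] z = [set: T].
  by apply/setP => u; rewrite in_setT (ccE z) -(ccE u) mem_closed_nbhd.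
split; first by rewrite -cardsT -(NT y) card_closed_nbhd degree_in_setT.
move=> u v uv; have : v \in closed_nbhd [set: T] u by rewrite NT.
by case/setU1P=> [vu|]; [move: uv; rewrite vu eqxx | rewrite !inE].
Qed.

Lemma low_degree_setD_closed_nbhd F k v :
  {in F, forall y, degree_in F y = k} -> v \in F -> ~~ clique_component F v ->
  [exists y in F :\: closed_nbhd F v, degree_in (F :\: closed_nbhd F v) y < k].
Proof.
move=> degk vF nccv.
have [u uNv NuNv] : exists2 u, u \in nbhd F v & closed_nbhd F u != closed_nbhd F v.
  exact/forall_inPn.
have uF : u \in F by move: uNv; rewrite inE => /andP[].
have [y yNu yNv] : exists2 y, y \in closed_nbhd F u & y \notin closed_nbhd F v.
  apply/subsetPn; apply: contra NuNv => NuNv.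
  by rewrite eqEcard NuNv !card_closed_nbhd !degk // ltnSn.
have uNv' : u \in closed_nbhd F v := setU1r v uNv.
have /andP[yF euy] : (y \in F) && e u y.
  by move: yNu => /setU1P[yu|]; [move: yNv; rewrite yu uNv' | rewrite inE].
apply/exists_inP; exists y; first by rewrite inE yNv yF.
rewrite -(degk y yF); apply: proper_card; apply/properP; split.
  exact/nbhdS/subsetDl.
by exists u; rewrite inE ?in_setD ?uNv' // uF e_sym.
Qed.

Lemma alpha_in_max_degree F k :
  {in F, forall x, degree_in F x <= k} ->
  {in F, forall x, clique_component F x -> degree_in F x != k} ->
  2 * #|F| + [exists x in F, degree_in F x < k] <= (2 * k + 1) * alpha_in F.
Proof.
have [n] := ubnP #|F|; elim: n => // n IH in F *; rewrite ltnS => Fn degF ccF.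
have IHv v (F' := F :\: closed_nbhd F v) : v \in F ->
    2 * #|F'| + [exists x in F', degree_in F' x < k] <= (2 * k + 1) * alpha_in F'.
  move=> vF; have F'F : F' \subset F := subsetDl _ _.
  apply: IH => [|x /setDP[xF _]|x xF' ccx].
  - by move: Fn; rewrite /F' (card_setD_closed_nbhd vF); lia.
  - exact: leq_trans (degree_inS x F'F) (degF x xF).
  - apply/negP => /eqP dx; have xF := subsetP F'F x xF'.
    have ccFx : clique_component F x.
      apply: (clique_componentS F'F xF' ccx) => y yN.
      rewrite (degree_clique_component ccx yN) dx degF //.
      exact: subsetP F'F y (subsetP (closed_nbhd_sub xF') y yN).
    move: (ccF x xF ccFx); rewrite eqn_leq degF //= -dx.
    by rewrite degree_inS.
have step v (b : bool) : v \in F -> degree_in F v < k + b ->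
    2 * #|F :\: closed_nbhd F v| + b
      <= (2 * k + 1) * alpha_in (F :\: closed_nbhd F v) ->
    2 * #|F| + ~~ b <= (2 * k + 1) * alpha_in F.
  move=> vF dv IHF'; rewrite (card_setD_closed_nbhd vF).
  apply: leq_trans (leq_mul (leqnn _) (alpha_in_setD_closed_nbhd vF)).
  move: dv IHF'; rewrite mulnS; set a := (2 * k + 1) * _; case: b; lia.
case: (boolP [exists x in F, degree_in F x < k]) => [/exists_inP[v vF dv] | nolow].
  apply: (step v false vF); first by rewrite addn0.
  by rewrite addn0; exact: leq_trans (leq_addr _ _) (IHv v vF).
case: (set_0Vmem F) => [->|[v vF]]; first by rewrite cards0.
have degk : {in F, forall y, degree_in F y = k}.
  move=> y yF; apply/eqP; rewrite eqn_leq degF //= leqNgt.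
  by apply: contra nolow => dy; apply/exists_inP; exists y.
have nccv : ~~ clique_component F v.
  by apply/negP => /(ccF v vF); rewrite degk ?eqxx.
apply: (step v true) => //; first by rewrite degk ?addn1.
by rewrite -(low_degree_setD_closed_nbhd degk vF nccv); apply: IHv.
Qed.

Section Weights.
Variables (R : realFieldType) (D : nat) (c : nat -> R).
Local Open Scope ring_scope.
Hypothesis c_antimono : forall i j, (1 <= i <= j)%N -> (j <= D)%N -> c j <= c i.
Hypothesis c_step : forall i, (1 <= i < D)%N -> i%:R * c i + c i.+1 <= 1.
Hypothesis c_bound : forall k, (1 <= k <= D)%N -> (2 * k + 1)%:R * c k <= 2.
Hypothesis deg_le : forall x, (deg e x <= D)%N.

Lemma weight_le1 i : (1 <= i <= D)%N -> c i <= 1.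
Proof.
move=> iD; have := c_bound iD.
have : 3 <= (2 * i + 1)%:R :> R by rewrite ler_nat; case/andP: iD; lia.
by nra.
Qed.

Lemma sum_weights_le1 K (d : T -> nat) j y0 :
  y0 \in K -> #|K| = j.+1 -> (j < d y0 <= D)%N ->
  {in K, forall y, (j <= d y <= D)%N} -> \sum_(y in K) c (d y) <= 1.
Proof.
move=> y0K cardK /andP[jd dD] dK.
have cardK' : #|K :\ y0| = j by move: cardK; rewrite (cardsD1 y0) y0K; lia.
have cy0 : c (d y0) <= c j.+1 by apply: c_antimono; rewrite ?jd.
rewrite (big_setD1 y0) //=; case: (posnP j) => [j0 | j_pos].
  rewrite j0 in cardK'; rewrite (cards0_eq cardK') big_set0 addr0.
  by apply: le_trans cy0 (weight_le1 _); rewrite ltn0Sn (leq_trans jd dD).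
apply: le_trans (_ : c j.+1 + c j *+ j <= 1).
  apply: lerD cy0 (le_trans _ (_ : \sum_(y in K :\ y0) c j <= _)).
    apply: ler_sum => y /setD1P[_ yK]; have /andP[jdy dyD] := dK y yK.
    by apply: c_antimono; rewrite ?j_pos ?jdy ?dyD.
  by rewrite sumr_const cardK'.
by rewrite -mulr_natl addrC c_step // j_pos (leq_trans jd).
Qed.

Lemma degree_in_le S x : (degree_in S x <= D)%N.
Proof. by rewrite (leq_trans (degree_inS x (subsetT S))) // degree_in_setT. Qed.

Lemma sum_le_alpha_in_closed_nbhd (w : T -> R) A x :
  x \in A -> \sum_(y in closed_nbhd A x) w y <= 1 ->
  \sum_(y in A :\: closed_nbhd A x) w y <= (alpha_in (A :\: closed_nbhd A x))%:R ->
  \sum_(y in A) w y <= (alpha_in A)%:R.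
Proof.
move=> xA wN wrest.
rewrite (big_setID (closed_nbhd A x)) /= (setIidPr (closed_nbhd_sub xA)).
apply: le_trans (lerD wN wrest) _.
by rewrite nat1r ler_nat alpha_in_setD_closed_nbhd.
Qed.

Lemma sum_le_alpha_in_adj_closed (w : T -> R) C A :
  C \subset A -> adj_closed C A -> \sum_(y in C) w y <= (alpha_in C)%:R ->
  \sum_(y in A :\: C) w y <= (alpha_in (A :\: C))%:R ->
  \sum_(y in A) w y <= (alpha_in A)%:R.
Proof.
move=> CA Ccl wC wrest; rewrite (big_setID C) /= (setIidPr CA).
apply: le_trans (lerD wC wrest) _.
by rewrite -natrD ler_nat alpha_in_adj_closed.
Qed.

Lemma sum_weights_clique_component A S x :
  A \subset S -> x \in A -> clique_component A x -> ~~ clique_component S x ->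
  \sum_(y in closed_nbhd A x) c (degree_in S y) <= 1.
Proof.
move=> AS xA ccA nccS.
have [y0 y0N degy0] :
    exists2 y0, y0 \in closed_nbhd A x & (degree_in A y0 < degree_in S y0)%N.
  apply/exists_inP; apply: contraR nccS; rewrite negb_exists_in => /forall_inP le.
  by apply: (clique_componentS AS xA ccA) => y /le; rewrite -leqNgt.
apply: (sum_weights_le1 (j := degree_in A x) y0N); first exact: card_closed_nbhd.
  by rewrite -(degree_clique_component ccA y0N) degy0 degree_in_le.
by move=> y yN; rewrite -(degree_clique_component ccA yN) degree_inS ?degree_in_le.
Qed.

Lemma sum_weights_min_degree A x y0 :
  {in A, forall y, (degree_in A x <= degree_in A y)%N} -> x \in A ->
  y0 \in nbhd A x -> (degree_in A x < degree_in A y0)%N ->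
  \sum_(y in closed_nbhd A x) c (degree_in A y) <= 1.
Proof.
move=> xmin xA y0N degy0.
apply: (sum_weights_le1 (j := degree_in A x) (setU1r x y0N)).
- exact: card_closed_nbhd.
- by rewrite degy0 degree_in_le.
- by move=> y /(subsetP (closed_nbhd_sub xA)) yA; rewrite xmin // degree_in_le.
Qed.

Lemma sum_weights_degree_class A k (C := [set x in A | degree_in A x == k]) :
  {in A, forall x, ~~ clique_component A x} -> adj_closed C A ->
  \sum_(x in C) c (degree_in A x) <= (alpha_in C)%:R.
Proof.
move=> ncc Ccl; have CA : C \subset A by apply/subsetP => x; rewrite inE => /andP[].
have degA x : x \in C -> degree_in A x = k by rewrite inE => /andP[_ /eqP].
have degC x : x \in C -> degree_in C x = k.
  by move=> xC; rewrite -(degA x xC) /degree_in (nbhd_adj_closed CA Ccl xC).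
case: (set_0Vmem C) => [->|[x0 x0C]]; first by rewrite big_set0.
have x0A := subsetP CA x0 x0C.
have k_pos : (0 < k)%N.
  rewrite lt0n; apply: contraNneq (ncc x0 x0A) => k0.
  by apply: clique_component_degree0; rewrite degA.
have kD : (k <= D)%N by rewrite -(degA x0 x0C) degree_in_le.
have twice : (2 * #|C| <= (2 * k + 1) * alpha_in C)%N.
  apply: leq_trans (alpha_in_max_degree _ _); first exact: leq_addr.
    by move=> x /degC ->.
  move=> x xC ccC; have /negP[] := ncc x (subsetP CA x xC).
  apply: (clique_componentS CA xC ccC) => y /(subsetP (closed_nbhd_sub xC)) yC.
  by rewrite degA ?degC.
rewrite (eq_bigr (fun=> c k)) => [|x /degA -> //].
rewrite sumr_const -mulr_natr.
move: twice (c_bound (k := k)); rewrite -(ler_nat R) !natrM k_pos kD => twice bound.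
have a_pos : 0 < (2 * k + 1)%:R :> R by rewrite ltr0n addn1.
have m_ge0 : 0 <= #|C|%:R :> R := ler0n _ _.
by nra.
Qed.

Lemma sum_weights_le_alpha_in A S :
  A \subset S -> {in A, forall x, ~~ clique_component S x} ->
  \sum_(x in A) c (degree_in S x) <= (alpha_in A)%:R.
Proof.
have [n] := ubnP #|A|; elim: n => // n IH in A S *; rewrite ltnS => An AS nccS.
have IHsub B S' : (#|B| < #|A|)%N -> B \subset S' ->
    {in B, forall x, ~~ clique_component S' x} ->
    \sum_(x in B) c (degree_in S' x) <= (alpha_in B)%:R.
  by move=> BA; apply: IH; rewrite (leq_trans BA).
have IHrm S' x : x \in A -> A \subset S' -> {in A, forall y, ~~ clique_component S' y} ->
    \sum_(y in A :\: closed_nbhd A x) c (degree_in S' y)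
      <= (alpha_in (A :\: closed_nbhd A x))%:R.
  move=> xA AS' ncc; apply: IHsub.
  - by rewrite [X in (_ < X)%N](card_setD_closed_nbhd xA) addnS ltnS leq_addr.
  - exact: subset_trans (subsetDl _ _) AS'.
  - by move=> y /setDP[yA _]; apply: ncc.
case: (set_0Vmem A) => [->|[a aA]]; first by rewrite big_set0.
case: (pickP [pred x in A | clique_component A x]) => [x /andP[xA ccx] | noccA].
  apply: (sum_le_alpha_in_closed_nbhd xA _ (IHrm S x xA AS nccS)).
  exact: sum_weights_clique_component AS xA ccx (nccS x xA).
have nccA : {in A, forall x, ~~ clique_component A x}.
  by move=> x xA; apply/negP => ccx; move: (noccA x); rewrite /= xA ccx.
apply: le_trans (_ : \sum_(x in A) c (degree_in A x) <= _).
  apply: ler_sum => x xA; apply: c_antimono; rewrite ?degree_inS ?degree_in_le //.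
  rewrite andbT lt0n; apply: contra (nccA x xA) => /eqP.
  exact: clique_component_degree0.
have [v /= vA vmin] := arg_minnP (degree_in A) (P := [pred x in A]) aA.
set C := [set x in A | degree_in A x == degree_in A v].
have CA : C \subset A by apply/subsetP => x; rewrite inE => /andP[].
case/boolP: (adj_closed C A) => [Ccl | /forall_inPn[x xC /subsetPn[y yN yC]]].
  apply: (sum_le_alpha_in_adj_closed CA Ccl); first exact: sum_weights_degree_class.
  apply: IHsub; [|exact: subsetDl|by move=> y /setDP[yA _]; apply: nccA].
  rewrite -(cardsID C A) (setIidPr CA) -add1n leq_add2r card_gt0.
  by apply/set0Pn; exists v; rewrite inE vA /=.
move: xC; rewrite inE => /andP[xA /eqP degx].
apply: (sum_le_alpha_in_closed_nbhd xA _ (IHrm A x xA (subxx A) nccA)).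
apply: (sum_weights_min_degree (y0 := y)) => //; first by move=> z /vmin; rewrite degx.
have yA : y \in A by move: yN; rewrite inE => /andP[].
by rewrite ltn_neqAle degx vmin // andbT; move: yC; rewrite inE yA eq_sym.
Qed.

End Weights.

End InducedSubgraph.

Lemma sum_card_Vdeg (R : pzSemiRingType) (T : finType) (e : rel T) (f : nat -> R) m n :
  (forall x, m <= deg e x < n) ->
  (\sum_(m <= i < n) f i * (#|Vdeg e i|)%:R = \sum_x f (deg e x))%R.
Proof.
move=> deg_mn.
under eq_bigr => i _ do rewrite mulr_natr cardsE -sumr_const big_mkcond /=.
rewrite exchange_big /=; apply: eq_bigr => x _.
rewrite -big_mkcond /=.
rewrite (eq_bigl (fun i => i == deg e x)) => [|i]; last by rewrite unfold_in eq_sym.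
by rewrite big_nat1_eq deg_mn.
Qed.

Section RecursiveWeights.
Variables (R : realFieldType) (D : nat) (c : nat -> R).
Local Open Scope ring_scope.
Hypothesis cD_bound : c D <= 2 / (2 * D%:R + 1).
Hypothesis c_rec : forall i : nat, (1 <= i)%N -> (i <= D - 1)%N ->
  c i = Num.min ((1 - c i.+1) / i%:R) (2 / (2 * i%:R + 1)).

Lemma recursive_weight_bound k : (1 <= k <= D)%N -> (2 * k + 1)%:R * c k <= 2.
Proof.
case/andP=> k_pos kD; rewrite mulrC -ler_pdivlMr; last by rewrite ltr0n addn1.
have -> : (2 * k + 1)%:R = 2 * k%:R + 1 :> R by rewrite natrD natrM.
case: (ltnP k D) => [kD'|Dk]; last by rewrite (@anti_leq k D) ?kD.
by rewrite c_rec ?ge_min ?lexx ?orbT //; lia.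
Qed.

Lemma recursive_weight_step i : (1 <= i < D)%N -> i%:R * c i + c i.+1 <= 1.
Proof.
case/andP=> i_pos iD; rewrite -lerBrDr mulrC -ler_pdivlMr ?ltr0n //.
by rewrite c_rec ?ge_min ?lexx //; lia.
Qed.

Lemma recursive_weight_antimono i j : (1 <= i <= j)%N -> (j <= D)%N -> c j <= c i.
Proof.
case/andP=> i_pos; elim: j => [|j IHj]; first by case: i i_pos.
rewrite leq_eqVlt => /predU1P[<- //|ij] jD.
apply: le_trans (IHj ij (ltnW jD)).
have j_pos : (1 <= j)%N := leq_trans i_pos ij.
have J1 : 1 <= j%:R :> R by rewrite ler1n.
have bound : (2 * j%:R + 3) * c j.+1 <= 2.
  have -> : 2 * j%:R + 3 = (2 * j.+1 + 1)%:R :> R by rewrite natrD natrM -natr1; ring.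
  by rewrite recursive_weight_bound ?jD.
rewrite [c j]c_rec //; last by lia.
rewrite le_min ler_pdivlMr ?ltr0n // ler_pdivlMr; last by lra.
by apply/andP; split; nra.
Qed.

End RecursiveWeights.

Local Open Scope ring_scope.

Theorem corollary1 (R : realFieldType) (T : finType) (e : rel T) (D : nat)
  (c : nat -> R) :
  (3 <= D)%N ->
  simple_graph e -> connected_graph e -> max_degree_eq e D ->
  ~ is_complete e D.+1 ->
  0 < c D -> c D <= 2 / (2 * D%:R + 1) ->
  (forall i : nat, (1 <= i)%N -> (i <= D - 1)%N ->
     c i = Num.min ((1 - c i.+1) / i%:R) (2 / (2 * i%:R + 1))) ->
  \sum_(1 <= i < D.+1) c i * (#|Vdeg e i|)%:R <= (alpha e)%:R.
Proof.
move=> _ [e_sym e_irr] conn [deg_le [w degw]] not_complete _ cD_bound c_rec.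
have ncc x : ~~ clique_component e [set: T] x.
  apply/negP => /(connected_clique_component_complete e_sym e_irr w conn).
  by rewrite degw.
have deg_range x : (1 <= deg e x < D.+1)%N.
  rewrite ltnS deg_le andbT lt0n -degree_in_setT.
  by apply: contra (ncc x) => /eqP; apply: clique_component_degree0.
rewrite sum_card_Vdeg // alpha_in_setT.
rewrite (eq_big [in [set: T]] (fun x => c (degree_in e [set: T] x))) => [||x _].
- apply: (sum_weights_le_alpha_in e_sym e_irr _ _ _ deg_le) => //.
  + exact: recursive_weight_antimono.
  + exact: recursive_weight_step.
  + exact: recursive_weight_bound.
- by move=> x; rewrite in_setT.
- by rewrite degree_in_setT.
Qed.
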